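(* Fix $\delta\in\{0,1\}^m$, tolerances $\epsilon_{\mathrm a}\in\mathbb R$ and $\epsilon_{\mathrm r}\ge0$, and a $p$-simplex $\mathcal R\subseteq\Theta^*_\delta$ with vertices $v_1,\dots,v_{p+1}$. For each $i$ let $x_i$ be an optimal solution of the fixed-commutation problem with parameter $v_i$. For $\theta=\sum_i\alpha_iv_i\in\mathcal R$ (barycentric coordinates $\alpha_i\ge0$, $\sum_i\alpha_i=1$) let $x^*=\sum_i\alpha_ix_i$, $\hat V_\delta(\theta)=f(\theta,x^*,\delta)$ and $\bar V_\delta(\theta)=\sum_i\alpha_iV^*_\delta(v_i)$. Let $$\hat e_{\mathrm a}(\mathcal R)=\sup\{\bar V_\delta(\theta)-V^*_{\delta'}(\theta):\theta\in\mathcal R,\ \delta'\in\{0,1\}^m,\ \theta\in\Theta^*_{\delta'}\}.$$ Suppose that either $\hat e_{\mathrm a}(\mathcal R)\le\epsilon_{\mathrm a}$, or $\inf_{\theta\in\mathcal R}V^*(\theta)>0$ and $\hat e_{\mathrm r}(\mathcal R)\triangleq\hat e_{\mathrm a}(\mathcal R)/\inf_{\theta\in\mathcal R}V^*(\theta)\le\epsilon_{\mathrm r}$. Then for every $\theta\in\mathcal R$, $$\hat V_\delta(\theta)-V^*(\theta)\le\max\{\epsilon_{\mathrm a},\epsilon_{\mathrm r}V^*(\theta)\}.$$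
   Context: Let $p,n,m,d,l$ be positive integers and let $\mathcal K\subseteq\mathbb R^d$ be a convex cone that is a Cartesian product of convex cones. Let $f,g,h$ be functions on $\mathbb R^p\times\mathbb R^n\times\mathbb R^m$ with values in $\mathbb R$, $\mathbb R^l$, $\mathbb R^d$ respectively, such that for each fixed $\delta\in\{0,1\}^m$, $(\theta,x)\mapsto f(\theta,x,\delta)$ is jointly convex and $(\theta,x)\mapsto g(\theta,x,\delta)$, $h(\theta,x,\delta)$ are affine. For $\delta\in\{0,1\}^m$ and $\theta\in\mathbb R^p$, the fixed-commutation problem is: minimize $f(\theta,x,\delta)$ over $x\in\mathbb R^n$ subject to $g(\theta,x,\delta)=0$, $h(\theta,x,\delta)\in\mathcal K$; $V^*_\delta(\theta)\in\mathbb R\cup\{+\infty\}$ is its optimal value ($+\infty$ if infeasible) and $\Theta^*_\delta$ the set of $\theta$ where it is feasible. $V^*(\theta)=\min_{\delta\in\{0,1\}^m}V^*_\delta(\theta)$ is the optimal value of the mixed-integer problem minimizing jointly over $x$ and $\delta\in\{0,1\}^m$. *)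

From HB Require Import structures.
From mathcomp Require Import all_boot all_order all_algebra.
From mathcomp Require Import all_classical all_reals.
From mathcomp Require Import ereal.
Set Implicit Arguments. Unset Strict Implicit. Unset Printing Implicit Defensive.
Import Order.TTheory GRing.Theory Num.Theory.
Local Open Scope classical_set_scope.
Local Open Scope ring_scope.

Section MPDefs.
Variable R : realType.

Definition convex_cone (d : nat) (K : set 'rV[R]_d) : Prop :=
  forall x y, K x -> K y -> forall a b : R, 0 <= a -> 0 <= b -> K (a *: x + b *: y).

(* K is a Cartesian product of convex cones: the coordinates 0..d-1 are split
   into k consecutive blocks (block assignment blk, nondecreasing), and
   y \in K iff for every block j the part of y on block j (zero-padded) lies
   in the convex cone Kj j. *)
Definition block_part (d k : nat) (blk : 'I_d -> 'I_k) (j : 'I_k) (y : 'rV[R]_d)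
  : 'rV[R]_d := \row_i (if blk i == j then y 0 i else 0).

Definition product_of_convex_cones (d : nat) (K : set 'rV[R]_d) : Prop :=
  exists (k : nat) (blk : 'I_d -> 'I_k) (Kj : 'I_k -> set 'rV[R]_d),
    {homo blk : i j / (i <= j)%N >-> (i <= j)%N} /\
    (forall j, convex_cone (Kj j)) /\
    K = [set y | forall j, Kj j (block_part blk j y)].

Definition dvec (m : nat) (delta : {ffun 'I_m -> bool}) : 'rV[R]_m :=
  \row_i (delta i)%:R.

Definition jointly_convex (p n : nat) (F : 'rV[R]_p -> 'rV[R]_n -> R) : Prop :=
  forall th1 th2 x1 x2 (t : R), 0 <= t <= 1 ->
    F (t *: th1 + (1 - t) *: th2) (t *: x1 + (1 - t) *: x2)
      <= t * F th1 x1 + (1 - t) * F th2 x2.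

Definition affine2 (p n q : nat) (G : 'rV[R]_p -> 'rV[R]_n -> 'rV[R]_q) : Prop :=
  exists (A : 'M[R]_(p, q)) (B : 'M[R]_(n, q)) (c : 'rV[R]_q),
    forall th x, G th x = th *m A + x *m B + c.

Variables (p n m d l : nat).
Variables (f : 'rV[R]_p -> 'rV[R]_n -> 'rV[R]_m -> R)
          (g : 'rV[R]_p -> 'rV[R]_n -> 'rV[R]_m -> 'rV[R]_l)
          (h : 'rV[R]_p -> 'rV[R]_n -> 'rV[R]_m -> 'rV[R]_d)
          (K : set 'rV[R]_d).

Definition feasible (delta : {ffun 'I_m -> bool}) (th : 'rV[R]_p) (x : 'rV[R]_n)
  : Prop := g th x (dvec delta) = 0 /\ K (h th x (dvec delta)).

Definition optimal (delta : {ffun 'I_m -> bool}) (th : 'rV[R]_p) (x : 'rV[R]_n)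
  : Prop := feasible delta th x /\
    forall y, feasible delta th y -> f th x (dvec delta) <= f th y (dvec delta).

(* V*_delta(theta): optimal value (+oo if infeasible) *)
Definition Vstar_delta (delta : {ffun 'I_m -> bool}) (th : 'rV[R]_p) : \bar R :=
  ereal_inf [set e | exists x, feasible delta th x /\ e = (f th x (dvec delta))%:E].

Definition Theta_star (delta : {ffun 'I_m -> bool}) : set 'rV[R]_p :=
  [set th | exists x, feasible delta th x].

Definition Vstar (th : 'rV[R]_p) : \bar R :=
  \big[Order.min/+oo%E]_(delta : {ffun 'I_m -> bool}) Vstar_delta delta th.

Definition affinely_independent (v : 'I_p.+1 -> 'rV[R]_p) : Prop :=
  forall c : 'I_p.+1 -> R, \sum_i c i = 0 -> \sum_i c i *: v i = 0 ->
    forall i, c i = 0.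

Definition barycentric (alpha : 'I_p.+1 -> R) : Prop :=
  (forall i, 0 <= alpha i) /\ \sum_i alpha i = 1.

Definition bary_point (v : 'I_p.+1 -> 'rV[R]_p) (alpha : 'I_p.+1 -> R)
  : 'rV[R]_p := \sum_i alpha i *: v i.

Definition simplex (v : 'I_p.+1 -> 'rV[R]_p) : set 'rV[R]_p :=
  [set th | exists alpha, barycentric alpha /\ th = bary_point v alpha].

Definition xstar (xs : 'I_p.+1 -> 'rV[R]_n) (alpha : 'I_p.+1 -> R) : 'rV[R]_n :=
  \sum_i alpha i *: xs i.

Definition Vhat (delta : {ffun 'I_m -> bool}) (v : 'I_p.+1 -> 'rV[R]_p)
  (xs : 'I_p.+1 -> 'rV[R]_n) (alpha : 'I_p.+1 -> R) : R :=
  f (bary_point v alpha) (xstar xs alpha) (dvec delta).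

Definition Vbar (delta : {ffun 'I_m -> bool}) (v : 'I_p.+1 -> 'rV[R]_p)
  (alpha : 'I_p.+1 -> R) : \bar R :=
  (\sum_i (alpha i)%:E * Vstar_delta delta (v i))%E.

Definition ea_hat (delta : {ffun 'I_m -> bool}) (v : 'I_p.+1 -> 'rV[R]_p) : \bar R :=
  ereal_sup [set e | exists alpha delta', barycentric alpha /\
     Theta_star delta' (bary_point v alpha) /\
     e = (Vbar delta v alpha - Vstar_delta delta' (bary_point v alpha))%E].

Definition infV (v : 'I_p.+1 -> 'rV[R]_p) : \bar R :=
  ereal_inf [set e | exists th, simplex v th /\ e = Vstar th].

End MPDefs.

From HB Require Import structures.
From mathcomp Require Import all_boot all_order all_algebra.
From mathcomp Require Import all_classical all_reals.
From mathcomp Require Import ereal.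
Set Implicit Arguments. Unset Strict Implicit. Unset Printing Implicit Defensive.
Import Order.TTheory GRing.Theory Num.Theory.
Local Open Scope classical_set_scope.
Local Open Scope ring_scope.

(* Jensen's inequality bounds the cost of the interpolated point by the
   interpolated optimal cost: [Vhat <= Vbar].  At the same time, if
   [V*(theta)] is attained by the commutation [delta'], the pair
   [(theta, delta')] is one of those over which [ea_hat] is a supremum, so
   [Vbar - V* <= ea_hat].  The absolute tolerance then concludes directly,
   and the relative one because [ea_hat <= eps_r * inf V* <= eps_r * V*(theta)]. *)

Lemma jointly_convex_jensen (R : realType) (p n : nat)
    (F : 'rV[R]_p -> 'rV[R]_n -> R) (I : eqType) (s : seq I) (a : I -> R)
    (th : I -> 'rV[R]_p) (x : I -> 'rV[R]_n) :
  jointly_convex F -> (forall i, 0 <= a i) -> \sum_(i <- s) a i = 1 ->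
  F (\sum_(i <- s) a i *: th i) (\sum_(i <- s) a i *: x i)
    <= \sum_(i <- s) a i * F (th i) (x i).
Proof.
move=> convF; elim: s a => [|j s IH] a a_ge0.
  by rewrite big_nil => /eqP; rewrite eq_sym oner_eq0.
rewrite !big_cons; set S := \sum_(i <- s) a i => sum1.
have S_eq : S = 1 - a j by rewrite -sum1 addrAC subrr add0r.
have S_ge0 : 0 <= S by apply: sumr_ge0.
have [S0|S_neq0] := eqVneq S 0.
  have a0 i : i \in s -> a i = 0.
    by move: S0 => /eqP; rewrite psumr_eq0 // => /allP/(_ i) H /H /eqP.
  have aj1 : a j = 1 by rewrite -sum1 S0 addr0.
  rewrite !big1_seq ?addr0 ?aj1 ?scale1r ?mul1r // => i /andP[_ /a0 ->];
    by rewrite (scale0r, mul0r).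
pose b i := a i / S.
have scale_tail k (y : I -> 'rV[R]_k) :
    \sum_(i <- s) a i *: y i = (1 - a j) *: \sum_(i <- s) b i *: y i.
  by rewrite -S_eq scaler_sumr; apply: eq_bigr => i _; rewrite scalerA mulrC divfK.
have mul_tail : \sum_(i <- s) a i * F (th i) (x i) =
    (1 - a j) * \sum_(i <- s) b i * F (th i) (x i).
  by rewrite -S_eq mulr_sumr; apply: eq_bigr => i _; rewrite mulrA (mulrC S) divfK.
rewrite scale_tail scale_tail mul_tail.
apply: le_trans; first by apply: convF; rewrite a_ge0 /= -subr_ge0 -S_eq.
rewrite lerD2l ler_wpM2l -?S_eq // IH // => [i|]; first by rewrite divr_ge0.
by rewrite -mulr_suml divff.
Qed.

Section FixedCommutation.
Variables (R : realType) (p n m d l : nat).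
Variables (f : 'rV[R]_p -> 'rV[R]_n -> 'rV[R]_m -> R)
          (g : 'rV[R]_p -> 'rV[R]_n -> 'rV[R]_m -> 'rV[R]_l)
          (h : 'rV[R]_p -> 'rV[R]_n -> 'rV[R]_m -> 'rV[R]_d)
          (K : set 'rV[R]_d).

Local Notation Vstar_delta := (Vstar_delta f g h K).
Local Notation Vstar := (Vstar f g h K).

Lemma Vstar_delta_optimal delta th x :
  optimal f g h K delta th x -> Vstar_delta delta th = (f th x (dvec R delta))%:E.
Proof.
move=> [feas_x opt_x]; apply/le_anti/andP; split.
  by apply: ereal_inf_lbound; exists x.
by apply: le_ereal_inf_tmp => _ [y [feas_y ->]]; rewrite lee_fin; apply: opt_x.
Qed.

Lemma Theta_star_Vstar_delta delta th :
  Vstar_delta delta th != +oo%E -> Theta_star g h K delta th.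
Proof.
apply: contraNP => infeasible; rewrite /Vstar_delta.
suff -> : [set e | exists x, feasible g h K delta th x /\
   e = (f th x (dvec R delta))%:E] = set0 by rewrite ereal_inf0.
by apply/seteqP; split => // e [x [feas_x _]]; apply: infeasible; exists x.
Qed.

Lemma Vstar_attained th : exists delta', Vstar th = Vstar_delta delta' th.
Proof.
have [delta' _ Vmin] := @eq_bigmin _ _ _ +oo%E [ffun=> false] (fun _ => true)
  (fun delta => Vstar_delta delta th) isT (fun d _ => leey (Vstar_delta d th)).
by exists delta'.
Qed.

Variables (delta : {ffun 'I_m -> bool}) (v : 'I_p.+1 -> 'rV[R]_p).

Lemma Vbar_sub_Vstar_le_ea_hat alpha : barycentric alpha ->
  (Vbar f g h K delta v alpha - Vstar (bary_point v alpha)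
    <= ea_hat f g h K delta v)%E.
Proof.
move=> bary; have [delta' ->] := Vstar_attained (bary_point v alpha).
have [Voo|V_neq_oo] := eqVneq (Vstar_delta delta' (bary_point v alpha)) +oo%E.
  by rewrite Voo addeNy leNye.
apply: ereal_sup_ubound; exists alpha, delta'; split => //; split => //.
exact: Theta_star_Vstar_delta V_neq_oo.
Qed.

Lemma Vhat_le_Vbar xs alpha :
  jointly_convex (fun th x => f th x (dvec R delta)) ->
  (forall i, optimal f g h K delta (v i) (xs i)) -> barycentric alpha ->
  ((Vhat f delta v xs alpha)%:E <= Vbar f g h K delta v alpha)%E.
Proof.
move=> convf opt_xs [alpha_ge0 alpha_sum1].
rewrite /Vbar (eq_bigr _ (fun i _ => congr1 _ (Vstar_delta_optimal (opt_xs i)))).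
rewrite sumEFin lee_fin.
exact: (jointly_convex_jensen _ _ convf alpha_ge0 alpha_sum1).
Qed.

Lemma infV_le_Vstar alpha : barycentric alpha ->
  (infV f g h K v <= Vstar (bary_point v alpha))%E.
Proof.
move=> bary; apply: ereal_inf_lbound.
by exists (bary_point v alpha); split; first exists alpha.
Qed.

End FixedCommutation.

(* [w] plays [V*(theta)], [gap] the bound [ea_hat] on [x - w], and [I] the
   lower bound [inf V*] of [w]. *)
Lemma tolerance_bound (R : realType) (x w gap I : \bar R) (eps_a eps_r : R) :
  (0 <= eps_r)%R -> (x - w <= gap)%E -> (I <= w)%E ->
  (gap <= eps_a%:E)%E \/ ((0 < I)%E /\ (gap / I <= eps_r%:E)%E) ->
  (x - w <= Order.max eps_a%:E (eps_r%:E * w))%E.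
Proof.
move=> eps_r_ge0 x_w_gap I_le_w [gap_le|[I_gt0 gap_rel]].
  by rewrite le_max (le_trans x_w_gap gap_le).
rewrite le_max; apply/orP; right.
case: w x_w_gap I_le_w => [w| |] x_w_gap I_le_w; last 2 first.
- by rewrite addeNy leNye.
- by move: (lt_le_trans I_gt0 I_le_w).
case: I I_gt0 I_le_w gap_rel => [I| |] //= I_gt0 I_le_w gap_rel.
rewrite lte_fin in I_gt0; rewrite lee_fin in I_le_w.
rewrite inver gt_eqF // lee_pdivrMr // in gap_rel.
apply: (le_trans x_w_gap); apply: (le_trans gap_rel).
by rewrite -EFinM lee_fin ler_wpM2l.
Qed.

Theorem theorem7 (R : realType) (p n m d l : nat)
  (f : 'rV[R]_p -> 'rV[R]_n -> 'rV[R]_m -> R)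
  (g : 'rV[R]_p -> 'rV[R]_n -> 'rV[R]_m -> 'rV[R]_l)
  (h : 'rV[R]_p -> 'rV[R]_n -> 'rV[R]_m -> 'rV[R]_d)
  (K : set 'rV[R]_d)
  (hp : (0 < p)%N) (hn : (0 < n)%N) (hm : (0 < m)%N) (hd : (0 < d)%N) (hl : (0 < l)%N)
  (hK : convex_cone K) (hKprod : product_of_convex_cones K)
  (hf : forall delta : {ffun 'I_m -> bool},
          jointly_convex (fun th x => f th x (dvec R delta)))
  (hg : forall delta : {ffun 'I_m -> bool},
          affine2 (fun th x => g th x (dvec R delta)))
  (hh : forall delta : {ffun 'I_m -> bool},
          affine2 (fun th x => h th x (dvec R delta)))
  (delta : {ffun 'I_m -> bool}) (eps_a eps_r : R) (heps_r : 0 <= eps_r)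
  (v : 'I_p.+1 -> 'rV[R]_p) (hv : affinely_independent v)
  (hRsub : simplex v `<=` Theta_star g h K delta)
  (xs : 'I_p.+1 -> 'rV[R]_n)
  (hxs : forall i, optimal f g h K delta (v i) (xs i))
  (htol : (ea_hat f g h K delta v <= eps_a%:E)%E \/
          ((0 < infV f g h K v)%E /\
           (ea_hat f g h K delta v / infV f g h K v <= eps_r%:E)%E)) :
  forall alpha : 'I_p.+1 -> R, barycentric alpha ->
    ((Vhat f delta v xs alpha)%:E - Vstar f g h K (bary_point v alpha)
      <= Order.max eps_a%:E (eps_r%:E * Vstar f g h K (bary_point v alpha)))%E.
Proof.
move=> alpha bary.
apply: (tolerance_bound heps_r _ (infV_le_Vstar f g h K v bary) htol).
apply: le_trans (Vbar_sub_Vstar_le_ea_hat f g h K delta v bary).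
exact/leeD2r/Vhat_le_Vbar.
Qed.
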